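(* In the setting below, suppose $n\ge 3$ and let $p,q\in X$ with $S_p\cup S_q=E$ and $S_p\cap S_q=\{e_k\}$. If $|S_p|\ge 3$ and $|S_q|\ge 3$, then any strange index of $p$ or of $q$ equals $e_k$. If $|S_p|=2$, then any strange index of $q$ equals $e_k$.
   Context: Setting: $E=\{e_0,\dots,e_n\}\subset\mathbb R^n$ is the vertex set of an $n$-simplex with $e_0+\cdots+e_n=0$, and $X\subset\mathbb R^n\setminus\{0\}$ is a finite set with $E\subseteq X$, no element of $X$ a positive multiple of another, such that every $n+1$ points of $X$ are in good position. (A finite set $A$ is in conical position if $0\notin\operatorname{conv}A$ and no point of $A$ lies in the positive hull—set of nonnegative linear combinations—of the other points; it is in good position otherwise.) For $p\in X$, the support $S_p$ is the minimal subset of $E$ whose positive hull contains $p$; then $p=\sum_{e_i\in S_p}\lambda_ie_i$ uniquely with all $\lambda_i>0$. Convention: each $p\in X$ is replaced by the positive multiple for which $\min_{e_i\in S_p}\lambda_i=1$. An element $e_j\in S_p$ is a strange index of $p$ if $\lambda_j>1$ (under these hypotheses there is at most one). *)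

(* Vectors of R^n are row vectors 'rV[R]_n over an arbitrary
   real field R (the statement is purely linear-algebraic / order-theoretic). *)
From HB Require Import structures.
From mathcomp Require Import all_boot all_order all_algebra.
Set Implicit Arguments. Unset Strict Implicit. Unset Printing Implicit Defensive.
Import Order.TTheory GRing.Theory Num.Theory.
Local Open Scope ring_scope.

Section Defs.
Variables (R : realFieldType) (n : nat).
Local Notation V := 'rV[R]_n.

Definition affinely_independent (e : 'I_n.+1 -> V) : Prop :=
  forall c : 'I_n.+1 -> R,
    \sum_(i < n.+1) c i = 0 -> \sum_(i < n.+1) c i *: e i = 0 ->
    forall i, c i = 0.

Definition in_conv (A : seq V) (v : V) : Prop :=
  exists c : V -> R, (forall x, x \in A -> 0 <= c x) /\
    \sum_(x <- A) c x = 1 /\ v = \sum_(x <- A) c x *: x.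

Definition in_pos_hull (B : seq V) (v : V) : Prop :=
  exists c : V -> R, (forall x, x \in B -> 0 <= c x) /\
    v = \sum_(x <- B) c x *: x.

(* conical position of a finite set A (A given as a duplicate-free seq);
   rem a A is A \ {a}. *)
Definition conical_position (A : seq V) : Prop :=
  ~ in_conv A 0 /\ (forall a, a \in A -> ~ in_pos_hull (rem a A) a).

Definition good_position (A : seq V) : Prop := ~ conical_position A.

Definition in_pos_hull_E (e : 'I_n.+1 -> V) (S : {set 'I_n.+1}) (v : V) : Prop :=
  exists l : 'I_n.+1 -> R, (forall i, i \in S -> 0 <= l i) /\
    v = \sum_(i in S) l i *: e i.

Definition is_support (e : 'I_n.+1 -> V) (p : V) (S : {set 'I_n.+1}) : Prop :=
  in_pos_hull_E e S p /\
  (forall S' : {set 'I_n.+1}, S' \proper S -> ~ in_pos_hull_E e S' p).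

(* e_j is a strange index of p: after replacing p by the positive multiple
   c p whose (positive) coefficients l_i on its support S_p have minimum 1,
   the coefficient l_j exceeds 1. *)
Definition strange_index (e : 'I_n.+1 -> V) (p : V) (j : 'I_n.+1) : Prop :=
  exists (S : {set 'I_n.+1}) (c : R) (l : 'I_n.+1 -> R),
    [/\ is_support e p S, j \in S, 0 < c,
        (forall i, i \in S -> 0 < l i) &
        c *: p = \sum_(i in S) l i *: e i] /\
    (forall i, i \in S -> 1 <= l i) /\ (exists2 i, i \in S & l i = 1) /\
    1 < l j.

Definition setting (e : 'I_n.+1 -> V) (X : seq V) : Prop :=
  [/\ affinely_independent e /\ \sum_(i < n.+1) e i = 0,
      (forall i, e i \in X), ~~ ((0 : V) \in X),
      (forall x y, x \in X -> y \in X -> x != y ->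
          forall t : R, 0 < t -> x != t *: y) &
      (forall A : seq V, uniq A -> size A = n.+1 -> {subset A <= X} ->
          good_position A)].

End Defs.

From HB Require Import structures.
From mathcomp Require Import all_boot all_order all_algebra.
From mathcomp Require Import lra.
Import Order.TTheory GRing.Theory Num.Theory.
Local Open Scope ring_scope.
Set Implicit Arguments. Unset Strict Implicit.

(* Since e_0 + ... + e_n = 0 and the e_i are affinely independent, a linear
   relation sum_i w_i e_i = 0 forces all w_i to be equal.  Hence a relation
   among points given by their coordinates on the vertices can be read off
   coordinate-wise, and supports (positive coefficients, never all of E) are
   unique.  A family is in conical position as soon as every relation with at
   most one negative coefficient is trivial (conical_of_relations).

   Let p have support S (|S| >= 3), coefficients l with minimum 1, and a
   strange index j <> k; let b be outside S, so b lies in the support S' of q.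
   - If some a <> k in S has l_a < l_j and l_a <= l_k, then p, q and the
     vertices other than e_a, e_b are in conical position
     (conical_two_points).
   - Otherwise the minimum 1 is attained at k and some a in S other than
     j, k has l_k < l_a (as well as l_k < l_j): then p and the vertices
     other than e_k are in conical position (conical_one_point).
   Either way n+1 points of X are in conical position, a contradiction.  The
   case |S_p| = 2 reduces to the first one for q, since then |S_q| = n. *)

Definition at_most_one_negative (R : realFieldType) (n : nat) (A : seq 'rV[R]_n)
    (c : 'rV[R]_n -> R) : Prop :=
  forall x y, x \in A -> y \in A -> x != y -> 0 <= c x \/ 0 <= c y.

(* A duplicate-free family is in conical position as soon as every linear
   relation among its members with at most one negative coefficient is
   trivial: both a convex combination giving 0 and an expression of one
   member in the positive hull of the others are such relations. *)
Lemma conical_of_relations (R : realFieldType) (n : nat) (A : seq 'rV[R]_n) :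
  uniq A ->
  (forall c, at_most_one_negative A c ->
     \sum_(x <- A) c x *: x = 0 -> forall x, x \in A -> c x = 0) ->
  conical_position A.
Proof.
move=> uA trivial_rel; split.
  case=> c [c_ge0 [c_sum1 hc]].
  have c0 := trivial_rel c (fun x _ xA _ _ => or_introl (c_ge0 x xA)) (esym hc).
  by move: c_sum1; rewrite big_seq big1 => [/eqP|x /c0 //]; rewrite eq_sym oner_eq0.
move=> a aA [c [c_ge0 hc]].
have memA x : x \in rem a A = (x != a) && (x \in A) by rewrite mem_rem_uniq // inE.
pose c' x := if x == a then -1 else c x.
have c'_sign : at_most_one_negative A c'.
  move=> x y xA yA; rewrite /c'; case: (eqVneq x a) => [-> | xa] ay.
    by right; rewrite eq_sym (negbTE ay) c_ge0 // memA eq_sym ay.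
  by left; apply: c_ge0; rewrite memA xa.
have rel_c' : \sum_(x <- A) c' x *: x = 0.
  rewrite (perm_big _ (perm_to_rem aA)) big_cons /c' eqxx scaleN1r.
  rewrite big_seq_cond (eq_bigr (fun x => c x *: x)); last first.
    by move=> x /andP[]; rewrite memA => /andP[/negbTE ->].
  by rewrite -big_seq_cond -hc; apply: addNr.
have := trivial_rel c' c'_sign rel_c' a aA; rewrite /c' eqxx.
by move/eqP; rewrite oppr_eq0 oner_eq0.
Qed.

(* Sign bookkeeping for the relations of Lemmas conical_two_points and
   conical_one_point: the displayed equalities are the vertex coordinates of
   a relation, and the disjunctions say that at most one coefficient is
   negative. *)
Lemma two_point_signs (R : realFieldType) (P Q cj ck la lj lk mb mk : R) :
  0 < la -> 0 < mb -> 0 < mk -> la < lj -> la <= lk ->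
  P * la = Q * mb -> P * la = P * lj + cj -> P * la = P * lk + Q * mk + ck ->
  0 <= P \/ 0 <= Q -> 0 <= P \/ 0 <= cj -> 0 <= Q \/ 0 <= cj -> 0 <= ck \/ 0 <= cj ->
  P = 0 /\ Q = 0.
Proof.
move=> la0 mb0 mk0 laj lak hb hj hk PQ Pj Qj kj.
case: (lerP 0 cj) => [cj0 | cjN].
  (* P >= 0 (as P la = Q mb) and P (lj - la) = - cj <= 0. *)
  have P0 : 0 <= P by case: PQ => // Q0; nra.
  have P_0 : P = 0 by nra.
  by split => //; nra.
(* P, Q, ck >= 0 and P (lk - la) + Q mk + ck = 0. *)
have [P0 Q0 ck0] : [/\ 0 <= P, 0 <= Q & 0 <= ck] by split; lra.
have Q_0 : Q = 0 by nra.
by split => //; nra.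
Qed.

Lemma one_point_sign (R : realFieldType) (P co cj ca lm lj la : R) :
  0 < lm -> lm < lj -> lm < la ->
  P * lm = co -> P * lm = P * lj + cj -> P * lm = P * la + ca ->
  0 <= P \/ 0 <= co -> 0 <= P \/ 0 <= cj -> 0 <= ca \/ 0 <= cj ->
  P = 0.
Proof.
move=> lm0 lmj lma ho hj ha Po Pj aj.
(* If cj < 0 then P, ca >= 0 and P (la - lm) = - ca; otherwise P >= 0 (as
   P lm = co) and P (lj - lm) = - cj. *)
case: (lerP 0 cj) => [cj0 | cjN]; last by nra.
have P0 : 0 <= P by case: Po => // ?; nra.
nra.
Qed.

Section Simplex.
Variables (R : realFieldType) (n : nat) (e : 'I_n.+1 -> 'rV[R]_n).
Hypothesis e_aff : affinely_independent e.
Hypothesis e_sum0 : \sum_(i < n.+1) e i = 0.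

Lemma vertex_relation_const (w : 'I_n.+1 -> R) :
  \sum_i w i *: e i = 0 -> forall u v, w u = w v.
Proof.
move=> hw u v; set m := (\sum_i w i) / n.+1%:R.
have n1_neq0 : n.+1%:R != 0 :> R by rewrite pnatr_eq0.
have sum_shift0 : \sum_(i < n.+1) (w i - m) = 0.
  by rewrite sumrB sumr_const card_ord -mulr_natr /m divfK // subrr.
have comb_shift0 : \sum_(i < n.+1) (w i - m) *: e i = 0.
  under eq_bigr => i _ do rewrite scalerBl.
  by rewrite sumrB hw -scaler_sumr e_sum0 scaler0 subrr.
have shift0 := e_aff sum_shift0 comb_shift0.
by have := shift0 u; have := shift0 v; lra.
Qed.

Lemma vertex_inj : injective e.
Proof.
move=> u v euv; apply/eqP/negPn/negP => neq_uv.
pose w i : R := (i == u)%:R - (i == v)%:R.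
have delta x : \sum_i (i == x)%:R *: e i = e x.
  rewrite (bigD1 x) //= eqxx scale1r big1 ?addr0 // => i /negbTE ->.
  exact: scale0r.
have hw : \sum_i w i *: e i = 0.
  under eq_bigr => i _ do rewrite scalerBl.
  by rewrite sumrB !delta euv subrr.
have := vertex_relation_const hw u v.
by rewrite /w !eqxx (negbTE neq_uv) eq_sym (negbTE neq_uv) /=; lra.
Qed.

Definition zext (S : {set 'I_n.+1}) (l : 'I_n.+1 -> R) i := if i \in S then l i else 0.

Lemma sum_zext (S : {set 'I_n.+1}) l :
  \sum_(i in S) l i *: e i = \sum_i zext S l i *: e i.
Proof.
rewrite big_mkcond; apply: eq_bigr => i _; rewrite /zext.
by case: (i \in S); rewrite ?scale0r.
Qed.

Lemma zext_in (S : {set 'I_n.+1}) l i : i \in S -> zext S l i = l i.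
Proof. by rewrite /zext => ->. Qed.

Lemma zext_out (S : {set 'I_n.+1}) l i : i \notin S -> zext S l i = 0.
Proof. by rewrite /zext => /negbTE ->. Qed.

Lemma zext_ge0 (S : {set 'I_n.+1}) l :
  (forall i, i \in S -> 0 < l i) -> forall i, 0 <= zext S l i.
Proof. by move=> l_gt0 i; rewrite /zext; case: ifP => // /l_gt0 /ltW. Qed.

Lemma support_coef_pos v S : is_support e v S ->
  exists l, (forall i, i \in S -> 0 < l i) /\ v = \sum_(i in S) l i *: e i.
Proof.
case=> [[l [l_ge0 hv]] minS]; exists l; split => // i iS.
rewrite lt0r l_ge0 // andbT; apply/negP => /eqP li0.
apply: (minS (S :\ i)); first exact: properD1.
exists l; split => [x /setD1P[_ /l_ge0] //|].
rewrite hv (bigD1 i) //= li0 scale0r add0r.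
by apply: eq_bigl => x; rewrite !inE andbC.
Qed.

(* A support never contains all vertices: a positive combination of all of
   them can be shifted by its least coefficient times sum_i e_i = 0. *)
Lemma support_proper v S : is_support e v S -> exists o, o \notin S.
Proof.
move=> sv; case: (sv) => _ minS.
have [o|allS] := pickP [pred o | o \notin S]; first by exists o.
have ST : S = setT by apply/setP => i; move: (allS i) => /= /negbFE ->; rewrite inE.
have [l [l_gt0 hv]] := support_coef_pos sv.
have [m _ m_min] := @arg_minP _ _ 'I_n.+1 ord0 xpredT l isT.
exfalso; apply: (minS (S :\ m)); first by apply: properD1; rewrite ST inE.
exists (fun i => l i - l m); split => [x _|]; first by rewrite subr_ge0 m_min.
have drop_m : \sum_(i in [set: 'I_n.+1] :\ m) (l i - l m) *: e i
              = \sum_i (l i - l m) *: e i.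
  rewrite [RHS](bigD1 m) //= subrr scale0r add0r.
  by apply: eq_bigl => x; rewrite !inE andbT.
rewrite hv ST drop_m; under [RHS]eq_bigr do rewrite scalerBl.
by rewrite sumrB -scaler_sumr e_sum0 scaler0 subr0; apply: eq_bigl => x; rewrite inE.
Qed.

Lemma support_unique v S1 S2 : is_support e v S1 -> is_support e v S2 -> S1 = S2.
Proof.
move=> s1 s2.
have [l1 [l1_gt0 h1]] := support_coef_pos s1.
have [l2 [l2_gt0 h2]] := support_coef_pos s2.
have [o1 o1S1] := support_proper s1; have [o2 o2S2] := support_proper s2.
pose w i := zext S1 l1 i - zext S2 l2 i.
have hw : \sum_i w i *: e i = 0.
  under eq_bigr => i _ do rewrite scalerBl.
  by rewrite sumrB -!sum_zext -h1 -h2 subrr.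
have w0 i : w i = 0.
  have := vertex_relation_const hw i o1; have := vertex_relation_const hw i o2.
  have := zext_ge0 l1_gt0 o2; have := zext_ge0 l2_gt0 o1.
  by rewrite /w /zext (negbTE o1S1) (negbTE o2S2); lra.
apply/setP => i; move: (w0 i); rewrite /w /zext.
case: (boolP (i \in S1)) => i1; case: (boolP (i \in S2)) => i2 //.
  by have := l1_gt0 _ i1; lra.
by have := l2_gt0 _ i2; lra.
Qed.

Lemma vertex_support i : e i != 0 -> is_support e (e i) [set i].
Proof.
move=> ei_neq0; split; first by exists (fun _ => 1); rewrite big_set1 scale1r.
move=> S' /proper_card; rewrite cards1 ltnS leqn0 => /eqP /cards0_eq ->.
by case=> l [_]; rewrite big_set0 => /eqP; rewrite (negbTE ei_neq0).
Qed.

Lemma scaled_coords p (S : {set 'I_n.+1}) c0 l :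
  0 < c0 -> c0 *: p = \sum_(i in S) l i *: e i ->
  p = \sum_i (zext S l i / c0) *: e i.
Proof.
move=> c0_gt0 hp; rewrite -[p]scale1r -(mulVf (lt0r_neq0 c0_gt0)) -scalerA hp.
rewrite sum_zext scaler_sumr; apply: eq_bigr => i _.
by rewrite scalerA mulrC.
Qed.

Definition family (xs : seq 'rV[R]_n) (T : {set 'I_n.+1}) : seq 'rV[R]_n :=
  xs ++ [seq e i | i <- enum T].

Lemma family_size xs T : size (family xs T) = (size xs + #|T|)%N.
Proof. by rewrite size_cat size_map cardE. Qed.

Lemma family_uniq xs T :
  uniq xs -> (forall x i, x \in xs -> x != e i) -> uniq (family xs T).
Proof.
move=> uxs xs_nv; rewrite cat_uniq uxs map_inj_uniq ?enum_uniq ?andbT //=.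
  by apply/hasPn => _ /mapP[i _ ->]; apply/negP => /(xs_nv _ i); rewrite eqxx.
exact: vertex_inj.
Qed.

Lemma point_in_family xs (T : {set 'I_n.+1}) x : x \in xs -> x \in family xs T.
Proof. by rewrite mem_cat => ->. Qed.

Lemma vertex_in_family xs (T : {set 'I_n.+1}) i : i \in T -> e i \in family xs T.
Proof. by move=> iT; rewrite mem_cat map_f ?orbT // mem_enum. Qed.

Lemma family_sign_point_vertex xs (T : {set 'I_n.+1}) c x i :
  uniq (family xs T) -> at_most_one_negative (family xs T) c ->
  x \in xs -> i \in T -> 0 <= c x \/ 0 <= c (e i).
Proof.
rewrite cat_uniq => /and3P[_ /hasPn disj _] c_sign xxs iT.
apply: c_sign; [exact: point_in_family | exact: vertex_in_family |].
by apply: contraTneq xxs => ->; apply: disj; rewrite map_f ?mem_enum.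
Qed.

Lemma family_sign_vertices xs (T : {set 'I_n.+1}) c i i' :
  at_most_one_negative (family xs T) c ->
  i \in T -> i' \in T -> i != i' -> 0 <= c (e i) \/ 0 <= c (e i').
Proof.
move=> c_sign iT i'T ii'; apply: c_sign; [exact: vertex_in_family.. |].
by apply: contra ii' => /eqP /vertex_inj ->.
Qed.

Definition rel_coord (xs : seq 'rV[R]_n) (coord : 'rV[R]_n -> 'I_n.+1 -> R)
    (T : {set 'I_n.+1}) (c : 'rV[R]_n -> R) i :=
  \sum_(x <- xs) c x * coord x i + zext T (fun i => c (e i)) i.

Lemma family_relation xs coord T c :
  (forall x, x \in xs -> x = \sum_i coord x i *: e i) ->
  \sum_(x <- family xs T) c x *: x = 0 ->
  forall i j, rel_coord xs coord T c i = rel_coord xs coord T c j.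
Proof.
move=> xs_coord rel0; apply: vertex_relation_const; rewrite -[RHS]rel0.
rewrite big_cat big_map big_enum /= sum_zext.
under eq_bigr => i _ do rewrite scalerDl scaler_suml.
rewrite big_split /= exchange_big /=; congr (_ + _).
rewrite [RHS]big_seq [LHS]big_seq; apply: eq_bigr => x /xs_coord x_eq.
by rewrite [X in _ = _ *: X]x_eq scaler_sumr; apply: eq_bigr => i _; rewrite scalerA.
Qed.

Lemma family_relation_trivial xs coord T c :
  (forall x, x \in xs -> c x = 0) -> (forall i, rel_coord xs coord T c i = 0) ->
  forall x, x \in family xs T -> c x = 0.
Proof.
move=> c_xs0 coord0 x; rewrite mem_cat => /orP[/c_xs0 //|/mapP[i]].
rewrite mem_enum => iT ->; move: (coord0 i); rewrite /rel_coord /zext iT.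
by rewrite big_seq big1 ?add0r // => y /c_xs0 ->; rewrite mul0r.
Qed.

Lemma conical_two_points p q (cp cq : 'I_n.+1 -> R) a b j k :
  p = \sum_i cp i *: e i -> q = \sum_i cq i *: e i ->
  uniq (family [:: p; q] (~: [set a; b])) ->
  0 < cp a -> cq a = 0 -> 0 < cq b -> cp b = 0 ->
  cp a < cp j -> cq j = 0 -> cp a <= cp k -> 0 < cq k ->
  conical_position (family [:: p; q] (~: [set a; b])).
Proof.
move=> hp hq uF cpa cqa cqb cpb cpj cqj cpk cqk; set T := ~: [set a; b].
have aT : a \notin T by rewrite !inE eqxx.
have bT : b \notin T by rewrite !inE eqxx orbT.
have jT : j \in T.
  by rewrite !inE negb_or; apply/andP; split; apply/eqP => ej; move: cpj; rewrite ej; lra.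
have kT : k \in T.
  rewrite !inE negb_or; apply/andP; split; apply/eqP => ek.
    by move: cqk; rewrite ek; lra.
  by move: cpk; rewrite ek; lra.
have kj : k != j by apply: contraTneq cqk => ->; rewrite cqj ltxx.
have pq : p != q by move: uF => /= /andP[]; rewrite inE negb_or => /andP[].
apply: conical_of_relations => // c c_sign rel0.
pose coord x := if x == p then cp else cq.
have coord_ok x : x \in [:: p; q] -> x = \sum_i coord x i *: e i.
  by rewrite !inE /coord => /orP[]/eqP->; rewrite ?eqxx // eq_sym (negbTE pq).
have W_val i : rel_coord [:: p; q] coord T c i
               = c p * cp i + c q * cq i + zext T (fun i => c (e i)) i.
  by rewrite /rel_coord !big_cons big_nil /coord eqxx eq_sym (negbTE pq) addr0.
have W := family_relation coord_ok rel0.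
have sign_pt := family_sign_point_vertex uF c_sign.
have [P0 Q0] : c p = 0 /\ c q = 0.
  apply: (@two_point_signs _ _ _ (c (e j)) (c (e k)) (cp a) (cp j) (cp k) (cq b) (cq k)) => //.
  - by have := W a b; rewrite !W_val !zext_out // cqa cpb; lra.
  - by have := W a j; rewrite !W_val zext_out // zext_in // cqa cqj; lra.
  - by have := W a k; rewrite !W_val zext_out // zext_in // cqa; lra.
  - by apply: (c_sign _ _ _ _ pq); apply: point_in_family; rewrite !inE eqxx ?orbT.
  - by apply: sign_pt jT; rewrite inE eqxx.
  - by apply: sign_pt jT; rewrite !inE eqxx orbT.
  - exact: family_sign_vertices c_sign kT jT kj.
apply: (family_relation_trivial (coord := coord)) => [x|i].
  by rewrite !inE => /orP[]/eqP->.
by rewrite (W i a) W_val zext_out // P0 Q0 !mul0r !addr0.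
Qed.

Lemma conical_one_point p (cp : 'I_n.+1 -> R) m j a o :
  p = \sum_i cp i *: e i -> uniq (family [:: p] (~: [set m])) ->
  0 < cp m -> cp m < cp j -> cp m < cp a -> cp o = 0 -> j != a ->
  conical_position (family [:: p] (~: [set m])).
Proof.
move=> hp uF cpm cpj cpa cpo ja; set T := ~: [set m].
have mT : m \notin T by rewrite !inE eqxx.
have inT i : cp m != cp i -> i \in T by rewrite !inE; apply: contra => /eqP->.
have [jT aT oT] : [/\ j \in T, a \in T & o \in T].
  by split; apply: inT; [rewrite lt_eqF | rewrite lt_eqF | rewrite cpo gt_eqF].
apply: conical_of_relations => // c c_sign rel0.
have coord_ok x : x \in [:: p] -> x = \sum_i cp i *: e i by rewrite inE => /eqP->.
have W_val i : rel_coord [:: p] (fun=> cp) T c i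
               = c p * cp i + zext T (fun i => c (e i)) i.
  by rewrite /rel_coord big_cons big_nil addr0.
have W := family_relation coord_ok rel0.
have sign_pt := family_sign_point_vertex uF c_sign (mem_head p [::]).
have P0 : c p = 0.
  apply: (@one_point_sign _ _ (c (e o)) (c (e j)) (c (e a)) (cp m) (cp j) (cp a)) => //.
  - by have := W m o; rewrite !W_val zext_out // zext_in // cpo; lra.
  - by have := W m j; rewrite !W_val zext_out // zext_in //; lra.
  - by have := W m a; rewrite !W_val zext_out // zext_in //; lra.
  - exact: sign_pt.
  - exact: sign_pt.
  - by apply: family_sign_vertices c_sign aT jT _; rewrite eq_sym.
apply: (family_relation_trivial (coord := fun=> cp)) => [x|i].
  by rewrite inE => /eqP->.
by rewrite (W i m) W_val zext_out // P0 mul0r addr0.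
Qed.

End Simplex.

Section StrangeIndex.
Variables (R : realFieldType) (n : nat) (e : 'I_n.+1 -> 'rV[R]_n) (X : seq 'rV[R]_n).
Hypothesis hset : setting e X.

Lemma setting_aff : affinely_independent e.
Proof. by case: hset => -[]. Qed.

Lemma setting_sum0 : \sum_(i < n.+1) e i = 0.
Proof. by case: hset => -[]. Qed.

Lemma vertex_neq0 i : e i != 0.
Proof. by case: hset => _ eX X0 _ _; apply: contraNneq X0 => <-. Qed.

Lemma support_not_vertex x S : is_support e x S -> (2 <= #|S|)%N -> forall i, x != e i.
Proof.
move=> sx S2 i; apply: contra_leqN S2 => /eqP xei; move: sx; rewrite xei => sv.
have sv1 := vertex_support (vertex_neq0 i).
by rewrite (support_unique setting_aff setting_sum0 sv sv1) cards1.
Qed.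

Lemma family_not_conical xs T :
  {subset xs <= X} -> uniq (family e xs T) -> size (family e xs T) = n.+1 ->
  ~ conical_position (family e xs T).
Proof.
case: hset => _ eX _ _ good xsX uF sizeF; apply: good => // x.
by rewrite mem_cat => /orP[/xsX //|/mapP[i _ ->]].
Qed.

Variables (p : 'rV[R]_n) (S : {set 'I_n.+1}).
Hypotheses (pX : p \in X) (sp : is_support e p S).

Lemma one_point_case c0 l m j a :
  0 < c0 -> c0 *: p = \sum_(i in S) l i *: e i -> (forall i, i \in S -> 0 < l i) ->
  m \in S -> j \in S -> a \in S -> j != a -> l m < l j -> l m < l a -> False.
Proof.
move=> c0_gt0 hp l_gt0 mS jS aS ja lmj lma.
have [o oS] := support_proper setting_sum0 sp.
have p_nv : forall i, p != e i.
  apply: (support_not_vertex sp); apply/card_gt1P; exists m, j.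
  by split=> //; apply: contraTneq lmj => ->; rewrite ltxx.
have uF : uniq (family e [:: p] (~: [set m])).
  by apply: (family_uniq setting_aff setting_sum0) => // x i; rewrite inE => /eqP->.
have pX' : {subset [:: p] <= X} by move=> x; rewrite inE => /eqP->.
have sizeF : size (family e [:: p] (~: [set m])) = n.+1.
  by rewrite family_size; have := cardsC [set m]; rewrite cards1 card_ord.
apply: (family_not_conical pX' uF sizeF).
apply: (conical_one_point setting_aff setting_sum0 (cp := fun i => zext S l i / c0)
          (j := j) (a := a) (o := o) _ uF) => //.
- exact: scaled_coords c0_gt0 hp.
- by rewrite zext_in ?divr_gt0 ?l_gt0.
- by rewrite !zext_in // ltr_pM2r ?invr_gt0.
- by rewrite !zext_in // ltr_pM2r ?invr_gt0.
- by rewrite zext_out ?mul0r.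
Qed.

Variables (q : 'rV[R]_n) (S' : {set 'I_n.+1}) (k : 'I_n.+1).
Hypotheses (qX : q \in X) (sq : is_support e q S').
Hypotheses (SUS' : S :|: S' = [set: 'I_n.+1]) (SIS' : S :&: S' = [set k]).

Lemma meet_in : k \in S /\ k \in S'.
Proof. by apply/andP; rewrite -in_setI SIS' set11. Qed.

Lemma meet_only i : i \in S -> i \in S' -> i = k.
Proof. by move=> iS iS'; apply/set1P; rewrite -SIS' in_setI iS iS'. Qed.

Lemma outside_S : exists2 b, b \notin S & b \in S'.
Proof.
have [b bS] := support_proper setting_sum0 sp; exists b => //.
by move: (in_setT b); rewrite -SUS' in_setU (negbTE bS).
Qed.

Lemma two_point_case c0 l a j :
  0 < c0 -> c0 *: p = \sum_(i in S) l i *: e i -> (forall i, i \in S -> 0 < l i) ->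
  a \in S -> j \in S -> a != k -> j != k -> l a < l j -> l a <= l k -> False.
Proof.
move=> c0_gt0 hp l_gt0 aS jS ak jk laj lak.
have [kS kS'] := meet_in; have [b bS bS'] := outside_S.
have [mu [mu_gt0 hq]] := support_coef_pos sq.
have notS' i : i \in S -> i != k -> i \notin S'.
  by move=> iS; apply: contra => iS'; rewrite (meet_only iS iS').
have ab : a != b by apply: contraNneq bS => <-.
have p_nv : forall i, p != e i.
  apply: (support_not_vertex sp); apply/card_gt1P; exists a, j.
  by split=> //; apply: contraTneq laj => ->; rewrite ltxx.
have q_nv : forall i, q != e i.
  apply: (support_not_vertex sq); apply/card_gt1P; exists k, b.
  by split=> //; apply: contraNneq bS => <-.
have pq : p != q.
  apply: contraNneq bS => epq; move: sq; rewrite -epq => sp'.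
  by rewrite (support_unique setting_aff setting_sum0 sp sp').
have uF : uniq (family e [:: p; q] (~: [set a; b])).
  apply: (family_uniq setting_aff setting_sum0) => [|x i]; first by rewrite /= inE pq.
  by rewrite !inE => /orP[]/eqP->.
have pqX : {subset [:: p; q] <= X} by move=> x; rewrite !inE => /orP[]/eqP->.
have sizeF : size (family e [:: p; q] (~: [set a; b])) = n.+1.
  by rewrite family_size; have := cardsC [set a; b]; rewrite cards2 ab card_ord.
apply: (family_not_conical pqX uF sizeF).
apply: (conical_two_points setting_aff setting_sum0 (cp := fun i => zext S l i / c0)
          (cq := zext S' mu) (j := j) (k := k)).
- exact: scaled_coords c0_gt0 hp.
- by rewrite -sum_zext.
- exact: uF.
- by rewrite zext_in ?divr_gt0 ?l_gt0.
- by rewrite zext_out ?notS'.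
- by rewrite zext_in ?mu_gt0.
- by rewrite zext_out ?mul0r.
- by rewrite !zext_in // ltr_pM2r ?invr_gt0.
- by rewrite zext_out ?notS'.
- by rewrite !zext_in // ler_pM2r ?invr_gt0.
- by rewrite zext_in ?mu_gt0.
Qed.

(* Normalising the coefficients l of p so
   that their minimum is 1 (attained at i0), a strange j <> k falls into
   two_point_case or one_point_case. *)
Lemma strange_index_meet j : (3 <= #|S|)%N -> strange_index e p j -> j = k.
Proof.
move=> S3 [S1 [c0 [l [[sp1 jS1 c0_gt0 l_gt0 hp] [l_ge1 [[i0 i0S li0] lj]]]]]].
have S1S := support_unique setting_aff setting_sum0 sp1 sp; subst S1.
case: (eqVneq j k) => // jk; exfalso; have [kS _] := meet_in.
have [i0k | i0k] := eqVneq i0 k; last first.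
  apply: (two_point_case c0_gt0 hp l_gt0 i0S jS1 i0k jk); first by rewrite li0.
  by rewrite li0 l_ge1.
subst i0; have [a [aS aj ak]] : exists a, [/\ a \in S, a != j & a != k].
  have : (0 < #|S :\ k :\ j|)%N.
    by move: S3; rewrite (cardsD1 k) kS (cardsD1 j (S :\ k)) !inE jk jS1 !add1n !ltnS.
  by case/card_gt0P => a; rewrite !inE => /and3P[aj ak aS]; exists a.
have [lak | lka] := lerP (l a) (l k).
  apply: (two_point_case c0_gt0 hp l_gt0 aS jS1 ak jk _ lak).
  by rewrite (le_lt_trans lak) ?li0.
by apply: (one_point_case c0_gt0 hp l_gt0 kS jS1 aS _ _ lka); rewrite 1?eq_sym ?li0.
Qed.

End StrangeIndex.

Unset Implicit Arguments.

Theorem proposition6p6 (R : realFieldType) (n : nat)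
    (e : 'I_n.+1 -> 'rV[R]_n) (X : seq 'rV[R]_n)
    (p q : 'rV[R]_n) (Sp Sq : {set 'I_n.+1}) (k : 'I_n.+1) :
  setting e X -> (3 <= n)%N ->
  p \in X -> q \in X ->
  is_support e p Sp -> is_support e q Sq ->
  Sp :|: Sq = [set: 'I_n.+1] -> Sp :&: Sq = [set k] ->
  (((3 <= #|Sp|)%N -> (3 <= #|Sq|)%N ->
      (forall j : 'I_n.+1, strange_index e p j -> j = k) /\
      (forall j : 'I_n.+1, strange_index e q j -> j = k)) /\
   (#|Sp| = 2%N -> forall j : 'I_n.+1, strange_index e q j -> j = k)).
Proof.
move=> hset n3 pX qX sp sq SUS SIS.
have SUS' : Sq :|: Sp = [set: 'I_n.+1] by rewrite setUC.
have SIS' : Sq :&: Sp = [set k] by rewrite setIC.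
split=> [Sp3 Sq3 | Sp2 j].
  by split=> j; [apply: (strange_index_meet hset pX sp qX sq SUS SIS) |
                 apply: (strange_index_meet hset qX sq pX sp SUS' SIS')].
have Sq3 : (3 <= #|Sq|)%N.
  have := cardsUI Sp Sq; rewrite SUS SIS cards1 cardsT card_ord Sp2.
  by rewrite addn1 add2n => -[<-].
exact: (strange_index_meet hset qX sq pX sp SUS' SIS').
Qed.
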